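(* For the cycle $C_n$ with $n\ge 3$ vertices, $b_{OCD}(C_n)=1$ if $n=3$ and $b_{OCD}(C_n)=\lceil n/3\rceil$ if $n\ge 4$.
   Context: A set $S\subseteq V$ is a dominating set of a graph $G=(V,E)$ if every vertex not in $S$ is adjacent to a vertex of $S$. A set $\tilde D\subseteq V$ is an outer-connected dominating set of $G$ if $\tilde D$ is dominating and the induced subgraph $G[V\setminus\tilde D]$ is connected (the empty graph counts as connected). $\tilde\gamma_c(G)$ is the minimum size of an outer-connected dominating set. For a graph $G$ without isolated vertices, the outer-connected bondage number $b_{OCD}(G)$ is the minimum number of edges whose removal from $G$ yields a graph $G'$ with $\tilde\gamma_c(G')>\tilde\gamma_c(G)$. *)

From mathcomp Require Import all_boot.
Set Implicit Arguments. Unset Strict Implicit. Unset Printing Implicit Defensive.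

(* A finite simple graph on vertex type T is given by its edge set
   E : {set {set T}}, each edge being an unordered pair {x, y}. *)
Section Graphs.
Variable T : finType.

Definition adj (E : {set {set T}}) (x y : T) : bool :=
  (x != y) && ([set x; y] \in E).

Definition dominating (E : {set {set T}}) (S : {set T}) : bool :=
  [forall x, (x \notin S) ==> [exists y in S, adj E x y]].

(* The induced subgraph G[C] is connected (the empty graph counts as connected). *)
Definition induced_connected (E : {set {set T}}) (C : {set T}) : bool :=
  [forall x in C, forall y in C,
     connect (fun a b => [&& adj E a b, a \in C & b \in C]) x y].

Definition ocd_set (E : {set {set T}}) (D : {set T}) : bool :=
  dominating E D && induced_connected E (~: D).

(* Outer-connected domination number: minimum size of an OCD set
   (the full vertex set is always one, so #|T| is a valid default). *)
Definition gamma_oc (E : {set {set T}}) : nat :=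
  \big[minn/#|T|]_(D : {set T} | ocd_set E D) #|D|.

(* Outer-connected bondage number: minimum number of edges F of G whose
   removal increases gamma_oc (default #|E|.+1 if no such set exists). *)
Definition bondage_ocd (E : {set {set T}}) : nat :=
  \big[minn/#|E|.+1]_(F : {set {set T}} |
       (F \subset E) && (gamma_oc E < gamma_oc (E :\: F))) #|F|.
End Graphs.

Definition cycle_edges (n : nat) : {set {set 'I_n}} :=
  [set [set i; ordS i] | i : 'I_n].

From mathcomp Require Import all_boot zify.
Set Implicit Arguments. Unset Strict Implicit. Unset Printing Implicit Defensive.

(* In a spanning subgraph of C_n every vertex has degree at most 2, so a vertex
   outside an outer-connected dominating set D has at most one neighbour outside D
   (its dominator in D is the other one); as the outside of D is connected, it has
   at most two vertices.  Hence gamma_oc >= n - 2 for every spanning subgraph, with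
   equality iff the subgraph contains three consecutive edges, whose two middle
   vertices form the outside of an optimal D.  Removing F from C_n thus raises
   gamma_oc(C_n) = n - 2 exactly when F meets every triple of consecutive edges.
   Such an F has at least n/3 edges, since F and its two rotations cover the
   cycle, and the edges {i, i+1} with 3 | i form one of size ceil(n/3). *)

Lemma big_minn_le_cond (I : finType) (P : pred I) (F : I -> nat) d i :
  P i -> \big[minn/d]_(j | P j) F j <= F i.
Proof.
move=> Pi; rewrite -big_filter.
have : i \in [seq j <- index_enum I | P j] by rewrite mem_filter Pi mem_index_enum.
elim: [seq j <- index_enum I | P j] => //= a s IH.
rewrite big_cons inE => /predU1P[->|/IH]; first exact: geq_minl.
exact: leq_trans (geq_minr _ _).
Qed.

Lemma big_minn_ge (I : finType) (P : pred I) (F : I -> nat) d m :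
  m <= d -> (forall i, P i -> m <= F i) -> m <= \big[minn/d]_(j | P j) F j.
Proof.
move=> md mF; elim/big_ind: _ => // x y mx my; by rewrite leq_min mx my.
Qed.

Lemma connected_functional_card_le2 (T : finType) (R : rel T) (C : {set T}) :
  symmetric R -> (forall x y z, R x y -> R x z -> y = z) ->
  {in C &, forall x y, connect R x y} -> #|C| <= 2.
Proof.
move=> symR funR connC; case: (set_0Vmem C) => [->|[x xC]]; first by rewrite cards0.
pose N := [set y | R x y].
have N_le1 : #|N| <= 1.
  by apply/card_le1_eqP => y z; rewrite !inE => xy xz; exact: funR xz xy.
have closed_N p u : u \in x |: N -> path R u p -> last u p \in x |: N.
  elim: p u => //= v p IH u uN /andP[uv vp]; apply: IH vp.
  case/setU1P: uN => [ux|]; first by subst u; rewrite !inE uv orbT.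
  by rewrite inE symR => ux; rewrite (funR _ _ _ uv ux) setU11.
have sub_N : C \subset x |: N.
  apply/subsetP => y yC; have /connectP[p xp ->] := connC x y xC yC.
  by apply: closed_N xp; rewrite setU11.
by rewrite (leq_trans (subset_leq_card sub_N)) // (leq_trans (leq_card_setU _ _).1)
  // cards1 ltnS.
Qed.

Section MaxDegreeTwo.
Variables (T : finType) (E : {set {set T}}).
Hypothesis deg_le2 : forall x, #|[set y | adj E x y]| <= 2.

Lemma adj_sym : symmetric (adj E).
Proof. by move=> x y; rewrite /adj eq_sym setUC. Qed.

Lemma ocd_card_compl_le2 D : ocd_set E D -> #|~: D| <= 2.
Proof.
case/andP=> /forallP dom conn.
pose R a b := [&& adj E a b, a \in ~: D & b \in ~: D].
apply: (@connected_functional_card_le2 _ R).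
- by move=> a b; rewrite /R adj_sym [(a \in _) && _]andbC.
- move=> x b c /and3P[xb xC bC] /and3P[xc _ cC]; apply/eqP; apply: contraT => bc.
  have /existsP[y /andP[yD xy]] : [exists y in D, adj E x y].
    by have := dom x; rewrite -in_setC xC.
  suff : 2 < #|[set y | adj E x y]| by rewrite ltnNge deg_le2.
  apply/card_gt2P; exists b, c, y; rewrite !inE xb xc xy bc.
  split=> //; split=> //.
  + by move: cC; apply: contraTneq => ->; rewrite inE negbK.
  + by move: bC; apply: contraTneq => <-; rewrite inE negbK.
- move=> x y xC yC.
  by move/forall_inP: conn => /(_ x xC) /forall_inP /(_ y yC).
Qed.

Lemma gamma_oc_ge : #|T| - 2 <= gamma_oc E.
Proof.
apply: big_minn_ge => [|D /ocd_card_compl_le2]; first exact: leq_subr.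
by rewrite cardsCs setCK; lia.
Qed.

End MaxDegreeTwo.

Lemma card_le_triple_cover (T : finType) (s : T -> T) (I : {set T}) :
  injective s -> (forall x, [|| x \in I, s x \in I | s (s x) \in I]) ->
  #|T| <= 3 * #|I|.
Proof.
move=> s_inj cover.
have sub : [set: T] \subset I :|: s @^-1: I :|: (s \o s) @^-1: I.
  by apply/subsetP => x _; rewrite !inE -orbA cover.
have card_s : #|s @^-1: I| = #|I| := card_preimset _ s_inj.
have card_ss : #|(s \o s) @^-1: I| = #|I| := card_preimset _ (inj_comp s_inj s_inj).
have := subset_leq_card sub; rewrite cardsT => /leq_trans; apply.
rewrite (leq_trans (leq_card_setU _ _).1) // card_ss.
by rewrite (leq_trans (leq_add (leq_card_setU _ _).1 (leqnn _))) // card_s; lia.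
Qed.

Lemma card_dvd3 m : #|[set i : 'I_m | 3 %| i]| = (m + 2) %/ 3.
Proof.
rewrite -sum1_card big_mkcond /=; under eq_bigr do rewrite inE.
elim: m => [|m IH]; first by rewrite big_ord0.
rewrite big_ord_recr /= IH.
have := divn_eq m 3; have := ltn_pmod m (isT : 0 < 3).
by rewrite /dvdn; case: (m %% 3 =P 0) => h /=; lia.
Qed.

Section Cycle.
Variable n : nat.
Hypothesis n_ge3 : 3 <= n.

Lemma val_iter_ordS k (i : 'I_n) : iter k (@ordS n) i = (i + k) %% n :> nat.
Proof.
elim: k => [|k IH]; first by rewrite addn0 modn_small.
by rewrite iterS /= IH -addn1 modnDml addn1 addnS.
Qed.

Lemma iter_ordS_neq k (i : 'I_n) : 0 < k < n -> iter k (@ordS n) i != i.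
Proof.
case/andP=> k_gt0 k_ltn; apply/eqP => /(congr1 (@nat_of_ord n)).
rewrite val_iter_ordS => /eqP.
rewrite -{2}(modn_small (ltn_ord i)) -{2}[val i]addn0 eqn_modDl mod0n modn_small //.
by rewrite (gtn_eqF k_gt0).
Qed.

Lemma dvd3_consecutive (i : 'I_n) : [|| 3 %| i, 3 %| ordS i | 3 %| ordS (ordS i)].
Proof.
rewrite (val_iter_ordS 1 i) (val_iter_ordS 2 i).
have := ltn_ord i; case: (ltngtP (i + 2) n) => [lt2|gt2|eq2] lt0.
- by rewrite !modn_small //; lia.
- by rewrite (_ : i + 1 = n) ?modnn ?dvdn0 ?orbT //; lia.
- by rewrite eq2 modnn dvdn0 !orbT.
Qed.

Lemma ordS_neq (i : 'I_n) : ordS i != i.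
Proof. exact: (@iter_ordS_neq 1 i (ltnW n_ge3)). Qed.

Lemma ordS2_neq (i : 'I_n) : ordS (ordS i) != i.
Proof. exact: (@iter_ordS_neq 2 i n_ge3). Qed.

Definition cedge (i : 'I_n) : {set 'I_n} := [set i; ordS i].

Lemma cedge_inj : injective cedge.
Proof.
move=> i j eq_ij; have : i \in cedge j by rewrite -eq_ij set21.
case/set2P => // ij; have : j \in cedge i by rewrite eq_ij set21.
rewrite ij; case/set2P=> /esym ji;
  [move: (ordS_neq j) | move: (ordS2_neq j)]; by rewrite ji eqxx.
Qed.

Lemma card_cycle_edges : #|cycle_edges n| = n.
Proof. by rewrite (card_imset _ cedge_inj) card_ord. Qed.

Lemma cedge_cycle (i : 'I_n) : cedge i \in cycle_edges n.
Proof. exact: imset_f. Qed.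

Definition has_three_consecutive (E : {set {set 'I_n}}) : bool :=
  [exists i, [&& cedge i \in E, cedge (ordS i) \in E & cedge (ordS (ordS i)) \in E]].

Lemma ocd_three_consecutive (E : {set {set 'I_n}}) i :
    cedge i \in E -> cedge (ordS i) \in E -> cedge (ordS (ordS i)) \in E ->
  ocd_set E (~: [set ordS i; ordS (ordS i)]).
Proof.
move=> Ei Es Et; apply/andP; split.
- apply/forallP => x; apply/implyP; rewrite inE negbK.
  case/set2P=> ->; apply/existsP.
  + exists i; rewrite !inE negb_or /adj !(eq_sym i) ordS_neq ordS2_neq /=.
    by rewrite setUC.
  + exists (ordS (ordS (ordS i))).
    by rewrite !inE negb_or ordS2_neq ordS_neq /adj eq_sym ordS_neq.
- rewrite /induced_connected setCK.
  apply/forall_inP => x /set2P[]->; apply/forall_inP => y /set2P[]->;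
  rewrite ?connect0 //; apply: connect1; rewrite /adj !inE !eqxx ?orbT ?andbT.
  + by rewrite eq_sym ordS_neq Es.
  + by rewrite ordS_neq setUC Es.
Qed.

Lemma card_compl_consecutive_pair (i : 'I_n) : #|~: [set ordS i; ordS (ordS i)]| = n - 2.
Proof. by rewrite cardsCs setCK cards2 card_ord eq_sym ordS_neq. Qed.

Section Subgraph.
Variable E : {set {set 'I_n}}.
Hypothesis sub_cycle : E \subset cycle_edges n.

Lemma adj_cycle_sub a b : adj E a b ->
  (b = ordS a /\ cedge a \in E) \/ (a = ordS b /\ cedge b \in E).
Proof.
case/andP=> + abE; have /imsetP[i _ abi] := subsetP sub_cycle _ abE.
rewrite abi in abE.
have : a \in cedge i by rewrite /cedge -abi set21.
have : b \in cedge i by rewrite /cedge -abi set22.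
case/set2P=> -> /set2P[]->; rewrite ?eqxx // => _.
- by right.
- by left.
Qed.

Lemma cycle_sub_degree_le2 x : #|[set y | adj E x y]| <= 2.
Proof.
apply: leq_trans (_ : #|[set ordS x; ord_pred x]| <= 2); last first.
  by rewrite cards2; case: (_ != _).
apply/subset_leq_card/subsetP => y; rewrite inE.
by case/adj_cycle_sub => [[-> _]|[-> _]]; rewrite !inE ?ordSK eqxx ?orbT.
Qed.

Lemma three_consecutive_of_dominating D u :
    dominating E D -> u \notin D -> ordS u \notin D -> cedge u \in E ->
  has_three_consecutive E.
Proof.
move=> /forallP dom uD vD Eu.
have /existsP[y /andP[yD /adj_cycle_sub]] := implyP (dom u) uD.
case=> [[yv _]|[uy Ey]]; first by rewrite -yv yD in vD.
have /existsP[z /andP[zD /adj_cycle_sub]] := implyP (dom (ordS u)) vD.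
case=> [[zw Ew]|[/ordS_inj uz _]]; last by rewrite uz zD in uD.
by apply/existsP; exists y; rewrite -uy Ey Eu Ew.
Qed.

Lemma three_consecutive_of_ocd D :
  ocd_set E D -> #|D| <= n - 2 -> has_three_consecutive E.
Proof.
move=> ocdD D_le.
have /cards2P[x [y [xy Dxy]]] : #|~: D| == 2.
  have := ocd_card_compl_le2 cycle_sub_degree_le2 ocdD.
  by rewrite cardsCs setCK card_ord eqn_leq => ->; lia.
case/andP: ocdD => dom /forall_inP /(_ x) conn.
have xC : x \in ~: D by rewrite Dxy set21.
have yC : y \in ~: D by rewrite Dxy set22.
move: conn => /(_ xC) /forall_inP /(_ y yC) /connectP[[|z p] /=].
  by move=> _ exy; rewrite exy eqxx in xy.
case/andP=> /and3P[xz _ zC] _ _.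
have zy : z = y.
  move: zC; rewrite Dxy => /set2P[zx|//].
  by move: xz; rewrite zx /adj eqxx.
rewrite zy in xz; move: xC yC; rewrite !inE => xD yD.
case/adj_cycle_sub: xz => [[yx Ex]|[xy' Ey]].
- by apply: (three_consecutive_of_dominating dom xD) Ex; rewrite -yx.
- by apply: (three_consecutive_of_dominating dom yD) Ey; rewrite -xy'.
Qed.

Lemma gamma_oc_cycle_sub_ge : n - 2 <= gamma_oc E.
Proof. by have := gamma_oc_ge cycle_sub_degree_le2; rewrite card_ord. Qed.

Lemma gamma_oc_cycle_sub_le : (gamma_oc E <= n - 2) = has_three_consecutive E.
Proof.
apply/idP/idP => [|/existsP[i /and3P[Ei Es Et]]].
- apply: contraLR; rewrite -ltnNge => /negP not3.
  apply: big_minn_ge => [|D ocdD]; first by rewrite card_ord; lia.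
  by rewrite ltnNge; apply/negP => /(three_consecutive_of_ocd ocdD).
- rewrite -(card_compl_consecutive_pair i).
  exact: big_minn_le_cond (ocd_three_consecutive Ei Es Et).
Qed.

End Subgraph.

Lemma gamma_oc_cycle : gamma_oc (cycle_edges n) = n - 2.
Proof.
apply/eqP; rewrite eqn_leq gamma_oc_cycle_sub_ge // andbT gamma_oc_cycle_sub_le //.
by apply/existsP; exists (Ordinal (ltnW (ltnW n_ge3))); rewrite !cedge_cycle.
Qed.

Definition meets_consecutive_triples (F : {set {set 'I_n}}) : bool :=
  [forall i, [|| cedge i \in F, cedge (ordS i) \in F | cedge (ordS (ordS i)) \in F]].

Lemma three_consecutive_setD F :
  has_three_consecutive (cycle_edges n :\: F) = ~~ meets_consecutive_triples F.
Proof.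
rewrite negb_forall; apply: eq_existsb => i.
by rewrite !inE !cedge_cycle !andbT !negb_or.
Qed.

Lemma card_meets_consecutive_triples F : meets_consecutive_triples F -> n <= 3 * #|F|.
Proof.
move=> /forallP meetsF; have le_pre : #|cedge @^-1: F| <= #|F|.
  rewrite -(card_imset _ cedge_inj); apply/subset_leq_card/subsetP.
  by move=> e /imsetP[i]; rewrite inE => Fi ->.
have cover i : [|| i \in cedge @^-1: F, ordS i \in cedge @^-1: F
                  | ordS (ordS i) \in cedge @^-1: F] by rewrite !inE meetsF.
have := card_le_triple_cover (@ordS_inj n) cover; rewrite card_ord => /leq_trans.
by apply; rewrite leq_mul2l le_pre.
Qed.

Lemma meets_consecutive_triples_mod3 :
  meets_consecutive_triples (cedge @: [set i : 'I_n | 3 %| i]).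
Proof.
apply/forallP => i; rewrite !(mem_imset _ _ cedge_inj) !inE.
exact: dvd3_consecutive.
Qed.

Lemma bondage_ocd_cycle : bondage_ocd (cycle_edges n) = (n + 2) %/ 3.
Proof.
pose P (F : {set {set 'I_n}}) := (F \subset cycle_edges n) && meets_consecutive_triples F.
rewrite /bondage_ocd (eq_bigl P) => [|F]; last first.
  apply: andb_id2l => _; rewrite gamma_oc_cycle ltnNge.
  by rewrite gamma_oc_cycle_sub_le ?subsetDl // three_consecutive_setD negbK.
apply/eqP; rewrite eqn_leq; apply/andP; split.
- set F0 := cedge @: [set i : 'I_n | 3 %| i].
  have F0_ok : P F0.
    rewrite /P meets_consecutive_triples_mod3 andbT.
    by apply/subsetP => e /imsetP[i _ ->]; exact: cedge_cycle.
  apply: leq_trans (big_minn_le_cond _ _ F0_ok) _.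
  by rewrite (leq_trans (leq_imset_card _ _)) // card_dvd3.
- apply: big_minn_ge => [|F /andP[_ /card_meets_consecutive_triples]]; last lia.
  by rewrite card_cycle_edges; lia.
Qed.
End Cycle.

Theorem theorem7p1 (n : nat) (hn : 3 <= n) :
  bondage_ocd (cycle_edges n) = (if n == 3 then 1 else (n + 2) %/ 3).
Proof. by rewrite bondage_ocd_cycle //; case: eqP => [->|]. Qed.
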